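(* There exists an absolute constant $C_2<1$ such that the following holds. Let $p$ be a prime, let $n\geq 2$ with $p>2n$, and let $A=\{v_1,\dots,v_n\}$ be a set of $n$ distinct elements of $\mathbb{Z}_p$. Let $Y_1,Y_2,Y_3$ be independent random variables, each uniformly distributed on $A$, and set $Y=Y_1+Y_2+Y_3$ (sum in $\mathbb{Z}_p$). Then $$\max_{x\in \mathbb{Z}_p} \mathbb{P}[Y=x]\leq\frac{C_2}{n}.$$
   Context: $\mathbb{Z}_p$ denotes the cyclic group of integers modulo the prime $p$. *)

From mathcomp Require Import all_boot all_order all_algebra.
Set Implicit Arguments. Unset Strict Implicit. Unset Printing Implicit Defensive.
Import GRing.Theory Num.Theory.
Local Open Scope ring_scope.

(* The joint law of (Y1,Y2,Y3) is the uniform law on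
   A x A x A, so P[Y1 + Y2 + Y3 = x] is the number of triples in A^3
   summing to x divided by #|A|^3. *)
Definition prob_sum3 (G : finZmodType) (A : {set G}) (x : G) : rat :=
  (#|[set t : G * G * G | [&& t.1.1 \in A, t.1.2 \in A, t.2 \in A
                            & t.1.1 + t.1.2 + t.2 == x]]|)%:R
  / ((#|A| ^ 3)%N)%:R.

From mathcomp Require Import all_boot all_order all_algebra fingroup cyclic.
From mathcomp Require Import zify ring lra.
Set Implicit Arguments. Unset Strict Implicit. Unset Printing Implicit Defensive.
Import GRing.Theory Num.Theory.

(* Let r(d) be the number of representations d = a - a' with a, a' in A and
   N the number of triples of A summing to x.  The pointwise inequality
   r_{A+A}(y) + r_{A+A}(y') <= |A| + r(y - y'), averaged over all pairs of first
   summands, gives 2|A| N <= |A|^3 + sum_{a,a' in A} r(a' - a).  The set P of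
   differences with r(d) >= 7|A|/8 satisfies P + P <= {d | r(d) >= 3|A|/4},
   a set of size at most 4|A|/3 < p because sum_d r(d) = |A|^2; so
   Cauchy-Davenport gives |P| <= (4|A| + 3)/6.  Bounding r by |A| on P and by
   7|A|/8 off P then yields 192 N <= 191 |A|^2, i.e. C_2 = 191/192. *)

Section CauchyDavenport.

Variable G : finZmodType.
Local Open Scope ring_scope.

Lemma sumset_transform (A B Q : {set G}) (t : G) :
    {in A & B, forall a b, a + b \in Q} ->
  {in A :|: [set b + t | b in B] & [set b in B | b + t \in A],
    forall a b, a + b \in Q}.
Proof.
move=> sABQ a c; rewrite !inE => /orP[aA | /imsetP[b bB ->]] /andP[cB ctA].
  exact: sABQ.
by rewrite addrAC -addrA addrC sABQ.
Qed.

Lemma card_sumset_transform (A B : {set G}) (t : G) :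
  (#|A :|: [set (b + t)%R | b in B]| + #|[set b in B | (b + t)%R \in A]|
    = #|A| + #|B|)%N.
Proof.
have inj_t : injective (+%R^~ t) by exact: addIr.
rewrite -[#|[set b in B | _]|](card_imset _ inj_t).
suff -> : [set b + t | b in [set b in B | b + t \in A]]
          = A :&: [set b + t | b in B] by rewrite cardsUI card_imset.
apply/setP => y; rewrite inE.
apply/imsetP/idP => [[b] | /andP[yA /imsetP[b bB Dy]]].
  rewrite inE => /andP[bB btA] ->; by rewrite btA; apply: imset_f.
by exists b; rewrite // inE bB -Dy.
Qed.

Hypothesis prime_G : prime #|G|.

Lemma prime_order_translate_closed (S : {set G}) (b s : G) :
  b != 0 -> s \in S -> (forall t, t \in S -> t + b \in S) ->
  S = setT.
Proof.
move=> nz_b Ss Sb; apply/setP => y; rewrite inE.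
have /cycleP[k Dy] : y - s \in <[b]>%g.
  by rewrite -(nt_gen_prime (G := [set: G]%G)) ?cardsT ?inE ?andbT.
have Ssb : forall m, s + b *+ m \in S.
  by elim=> [|m IHm]; rewrite ?mulr0n ?addr0 // mulrSr addrA Sb.
by rewrite -(subrK s y) Dy addrC FinRing.zmodXgE Ssb.
Qed.

Lemma cauchy_davenport (A B Q : {set G}) :
    A != set0 -> B != set0 -> {in A & B, forall a b, a + b \in Q} ->
  (#|Q| < #|G| -> #|A| + #|B| <= #|Q| + 1)%N.
Proof.
(* Induction on |B| through Dyson's transform
   (A, B) -> (A :|: (B + t), [set b in B | b + t \in A]) with t = e - b0;
   if no such transform shrinks B, then A is stable under the nonzero
   translation by some b - b0. *)
move=> + + + ltQG; have [k] := ubnP #|B|; elim: k A B => // k IHk A B ltBk.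
move=> nzA /set0Pn[b0 b0B] sABQ.
have leAQ : (#|A| <= #|Q|)%N.
  rewrite -(card_imset A (addIr b0)); apply/subset_leq_card/subsetP.
  by move=> _ /imsetP[a aA ->]; apply: sABQ.
have [|] := boolP [exists e in A, exists b in B, b + (e - b0) \notin A].
  case/exists_inP => e eA /exists_inP[b bB btA].
  set B' := [set c in B | c + (e - b0) \in A].
  have b0B' : b0 \in B' by rewrite inE b0B addrC subrK.
  have ltB'B : (#|B'| < #|B|)%N.
    apply: proper_card; rewrite properEneq andbC; apply/andP; split.
      by apply/subsetP => c; rewrite inE => /andP[].
    by apply: contraNneq btA => eqB'B; move: bB; rewrite -eqB'B inE => /andP[].
  have := IHk _ B' (leq_trans ltB'B ltBk) _ _ (sumset_transform sABQ).
  rewrite card_sumset_transform; apply.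
  - by apply/set0Pn; exists e; rewrite inE eA.
  - by apply/set0Pn; exists b0.
rewrite negb_exists_in => /forall_inP closedA.
have [B1 | /eqP] := eqVneq #|B| 1%N; first by rewrite B1 leq_add2r.
rewrite (cardsD1 b0) b0B add1n => /eqP; rewrite eqSS -lt0n card_gt0.
case/set0Pn => b; rewrite !inE => /andP[neq_bb0 bB].
have shiftA : forall e, e \in A -> e + (b - b0) \in A.
  move=> e eA; rewrite addrCA.
  by have := closedA e eA; rewrite negb_exists_in => /forall_inP/(_ b bB)/negPn.
have /set0Pn[a0 a0A] := nzA.
have nz_shift : b - b0 != 0 by rewrite subr_eq0.
have AT := prime_order_translate_closed nz_shift a0A shiftA.
by move: ltQG; rewrite ltnNge -cardsT -AT leAQ.
Qed.
End CauchyDavenport.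

Lemma sum_mem_card (T : finType) (A : {pred T}) : \sum_t (t \in A) = #|A|.
Proof.
by rewrite -sum1_card [RHS]big_mkcond; apply: eq_bigr => t _; case: (t \in A).
Qed.

Lemma sum_mem_addr (G : finZmodType) (S : {set G}) (d : G) :
  \sum_a ((a + d)%R \in S) = #|S|.
Proof. by rewrite -sum_mem_card [RHS](reindex_inj (addIr d)). Qed.

Lemma sum_mem_subl (G : finZmodType) (S : {set G}) (y : G) :
  \sum_a ((y - a)%R \in S) = #|S|.
Proof. by rewrite -sum_mem_card [RHS](reindex_inj (inv_inj (subKr y))). Qed.

Section RepresentationCounts.

Variables (G : finZmodType) (A : {set G}).
Local Notation n := #|A|.

Definition radd (y : G) : nat := \sum_b (b \in A) * ((y - b)%R \in A).
Definition rsub (d : G) : nat := \sum_a (a \in A) * ((a - d)%R \in A).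

Lemma rsub_le d : rsub d <= n.
Proof.
rewrite -sum_mem_card leq_sum // => a _.
by case: (a \in A); case: ((a - d)%R \in A).
Qed.

Lemma rsub0 : rsub 0%R = n.
Proof.
by rewrite -sum_mem_card; apply: eq_bigr => a _; rewrite subr0; case: (a \in A).
Qed.

Lemma sum_rsub : \sum_d rsub d = n * n.
Proof.
have -> : n * n = \sum_a (a \in A) * n by rewrite -big_distrl /= sum_mem_card.
rewrite exchange_big; apply: eq_bigr => a _.
by rewrite -big_distrr /= sum_mem_subl.
Qed.

Lemma rsubD_le d1 d2 : rsub d1 + rsub d2 <= rsub (d1 + d2)%R + n.
Proof.
rewrite -(sum_mem_addr A (- d1)%R) /rsub.
rewrite [X in _ + X <= _](reindex_inj (addIr (- d1)%R)).
rewrite -!big_split leq_sum // => a _; rewrite opprD addrA.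
by case: (a \in A); case: ((a - d1)%R \in A); case: ((a - d1 - d2)%R \in A).
Qed.

Lemma sum_subl_rsub (y y' : G) :
  \sum_b ((y - b)%R \in A) * ((y' - b)%R \in A) = rsub (y - y')%R.
Proof.
rewrite (reindex_inj (inv_inj (subKr y))); apply: eq_bigr => a _.
by rewrite subKr !opprB addrCA.
Qed.

Lemma raddD_le y y' : radd y + radd y' <= n + rsub (y - y')%R.
Proof.
rewrite -sum_mem_card -sum_subl_rsub -!big_split leq_sum // => b _.
by case: (b \in A); case: ((y - b)%R \in A); case: ((y' - b)%R \in A).
Qed.

Lemma card_sum3 (x : G) :
  #|[set t : G * G * G | [&& t.1.1 \in A, t.1.2 \in A, t.2 \in A
                          & (t.1.1 + t.1.2 + t.2 == x)%R]]|
    = \sum_(a in A) radd (x - a)%R.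
Proof.
transitivity (\sum_a \sum_b \sum_c
    ([&& a \in A, b \in A, c \in A & (a + b + c == x)%R] : nat)).
  rewrite -sum_mem_card [RHS]pair_bigA [RHS]pair_bigA /=.
  by apply: eq_bigr => t _; rewrite inE.
rewrite [RHS]big_mkcond; apply: eq_bigr => a _.
case: (a \in A) => /=; last by apply: big1 => b _; apply: big1.
apply: eq_bigr => b _; rewrite (bigD1 (x - a - b)%R) //= big1 ?addn0 => [|c].
  by rewrite -(addrA x) -opprD (addrC (a + b)%R) subrK eqxx andbT mulnb.
move=> c_neq; rewrite (_ : (a + b + c == x)%R = false) ?andbF //.
apply: contraNF c_neq => /eqP <-.
by rewrite -(addrA _ (- a)%R) -opprD (addrC (a + b)%R) addrK.
Qed.

Lemma sum_radd_le (x : G) :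
  2 * n * \sum_(a in A) radd (x - a)%R
    <= n ^ 3 + \sum_(a in A) \sum_(a' in A) rsub (a' - a)%R.
Proof.
set N := \sum_(a in A) _.
have : \sum_(a in A) \sum_(a' in A) (radd (x - a)%R + radd (x - a')%R)
       <= \sum_(a in A) \sum_(a' in A) (n + rsub (a' - a)%R).
  apply: leq_sum => a _; apply: leq_sum => a' _.
  have <- : ((x - a) - (x - a') = a' - a)%R by rewrite opprB addrC addrA subrK.
  exact: raddD_le.
under eq_bigr do rewrite big_split /= sum_nat_const.
under [X in _ <= X]eq_bigr do rewrite big_split /= sum_nat_const.
by rewrite !big_split /= !sum_nat_const -big_distrr /= -/N; lia.
Qed.

Definition popular (k m : nat) : {set G} := [set d | k * n <= m * rsub d].

Lemma card_popular k m : 0 < n -> k * #|popular k m| <= m * n.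
Proof.
move=> n_gt0; rewrite -(leq_pmul2l n_gt0).
have : \sum_(d in popular k m) k * n <= m * (n * n).
  rewrite -sum_rsub big_distrr /= [X in _ <= X](bigID (mem (popular k m))) /=.
  by apply: (leq_trans _ (leq_addr _ _)); apply: leq_sum => d; rewrite inE.
rewrite sum_nat_const; nia.
Qed.

Lemma popular0 : 0%R \in popular 7 8.
Proof. by rewrite inE rsub0 leq_mul2r leqnSn orbT. Qed.

Lemma popularD d1 d2 :
  d1 \in popular 7 8 -> d2 \in popular 7 8 -> (d1 + d2)%R \in popular 3 4.
Proof. by rewrite !inE => h1 h2; have := rsubD_le d1 d2; lia. Qed.

Lemma rsub_le_popular d : 8 * rsub d <= 7 * n + n * (d \in popular 7 8).
Proof.
by rewrite inE; have := rsub_le d; case: (leqP (7 * n) (8 * rsub d)); lia.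
Qed.

Lemma sum_rsub_le_popular :
  8 * \sum_(a in A) \sum_(a' in A) rsub (a' - a)%R
    <= 7 * n ^ 3 + n ^ 2 * #|popular 7 8|.
Proof.
have row a :
    8 * \sum_(a' in A) rsub (a' - a)%R <= 7 * n ^ 2 + n * #|popular 7 8|.
  rewrite big_distrr /=.
  apply: leq_trans (leq_sum _ (fun a' _ => rsub_le_popular (a' - a)%R)) _.
  rewrite big_split /= sum_nat_const -big_distrr /=.
  have : \sum_(a' in A) ((a' - a)%R \in popular 7 8) <= #|popular 7 8|.
    rewrite -(sum_mem_addr _ (- a)%R) [X in _ <= X](bigID (mem A)) /=.
    exact: leq_addr.
  by move=> le_sP; rewrite mulnCA mulnn leq_add2l leq_mul2l le_sP orbT.
rewrite big_distrr /=.
apply: leq_trans (leq_sum _ (fun a (_ : a \in A) => row a)) _.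
by rewrite sum_nat_const mulnDr mulnCA -expnS mulnA mulnn.
Qed.

Lemma sum_radd_bound (x : G) :
    prime #|G| -> 2 <= n -> 2 * n < #|G| ->
  192 * \sum_(a in A) radd (x - a)%R <= 191 * n ^ 2.
Proof.
move=> prime_G n_ge2 ltG; set N := \sum_(a in A) _.
have n_gt0 : 0 < n by apply: leq_trans n_ge2.
have cardQ := card_popular 3 4 n_gt0.
have cardP : #|popular 7 8| + #|popular 7 8| <= #|popular 3 4| + 1.
  have nzP : popular 7 8 != set0 by apply/set0Pn; exists 0%R; apply: popular0.
  by apply: cauchy_davenport popularD _ => //; lia.
have := sum_radd_le x; have := sum_rsub_le_popular; rewrite -/N.
set S := \sum_(a in A) _; set p := #|popular 7 8| => leS leN.
have le16 : 16 * n * N <= 15 * n ^ 3 + n ^ 2 * p by lia.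
have le6p : 6 * p <= 4 * n + 3 by lia.
have le96 : 96 * n * N <= 94 * n ^ 3 + 3 * n ^ 2 by nia.
have n3 : 2 * n ^ 2 <= n ^ 3 by rewrite (expnS n 2) leq_mul2r n_ge2 orbT.
by rewrite -(leq_pmul2l n_gt0); nia.
Qed.

End RepresentationCounts.

Local Open Scope ring_scope.

Theorem proposition3p2 :
  exists C2 : rat, C2 < 1 /\
    forall (p n : nat), prime p -> (2 <= n)%N -> (2 * n < p)%N ->
    forall A : {set 'Z_p}, #|A| = n ->
    forall x : 'Z_p, prob_sum3 A x <= C2 / n%:R.
Proof.
exists (191 / 192); split=> [|p n p_prime n_ge2 ltp A cardA x]; first by lra.
have cardZp : #|'Z_p| = p by rewrite card_ord Zp_cast // prime_gt1.
have := @sum_radd_bound _ A x; rewrite cardZp cardA => /(_ p_prime n_ge2 ltp).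
rewrite /prob_sum3 card_sum3 cardA; set N := (\sum_(a in A) _)%N => bound.
have n_gt0 : 0 < n%:R :> rat by rewrite ltr0n (ltnW n_ge2).
rewrite ler_pdivrMr; last by rewrite ltr0n expn_gt0 (ltnW n_ge2).
have -> : 191 / 192 / n%:R * (n ^ 3)%:R = 191 / 192 * (n ^ 2)%:R :> rat.
  by rewrite !natrX; field; exact: lt0r_neq0.
by move: bound; rewrite -(ler_nat rat) !natrM; lra.
Qed.
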